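(* Let $f:\mathbb{R}^n\to\mathbb{R}\cup\{+\infty\}$ be a proper, closed (lower semicontinuous), convex function, let $C_1,\dots,C_m\subseteq\mathbb{R}^n$ be nonempty closed convex sets, and let $\rho>0$. Define the penalized loss $$h_\rho(\mathbf{x}) = f(\mathbf{x})+\frac{\rho}{2m}\sum_{i=1}^m \operatorname{dist}(\mathbf{x},C_i)^2,$$ and assume $h_\rho$ is coercive. Starting from any $\mathbf{x}_0\in\mathbb{R}^n$, define the proximal distance iterates $$\mathbf{y}_k=\frac{1}{m}\sum_{i=1}^m P_{C_i}(\mathbf{x}_k),\qquad \mathbf{x}_{k+1}=\operatorname{prox}_{\rho^{-1}f}(\mathbf{y}_k).$$ Then a point is a fixed point of the algorithm map $\mathbf{x}\mapsto \operatorname{prox}_{\rho^{-1}f}\big(\frac{1}{m}\sum_{i=1}^m P_{C_i}(\mathbf{x})\big)$ if and only if it minimizes $h_\rho$, such fixed points exist, and the sequence $(\mathbf{x}_k)$ converges to a minimizer of $h_\rho$.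
   Context: For a function $g$, $\operatorname{prox}_g(\mathbf{y})=\operatorname{argmin}_{\mathbf{x}}\big[g(\mathbf{x})+\frac12\|\mathbf{x}-\mathbf{y}\|^2\big]$, with $\|\cdot\|$ the Euclidean norm. $P_{C}(\mathbf{x})$ denotes the Euclidean projection of $\mathbf{x}$ onto the closed convex set $C$, and $\operatorname{dist}(\mathbf{x},C)=\|\mathbf{x}-P_C(\mathbf{x})\|$. *)

From HB Require Import structures.
From mathcomp Require Import all_boot all_order all_algebra.
From mathcomp Require Import all_classical all_reals all_analysis.
Set Implicit Arguments. Unset Strict Implicit. Unset Printing Implicit Defensive.
Import Order.TTheory GRing.Theory Num.Theory.
Import numFieldNormedType.Exports.
Local Open Scope classical_set_scope.
Local Open Scope ring_scope.

Section Defs.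
Variables (R : realType) (n : nat).
Local Notation vec := 'rV[R]_n.

Definition enorm (x : vec) : R := Num.sqrt (\sum_(j < n) x ord0 j ^+ 2).

Definition convex_set_Rn (C : set vec) : Prop :=
  forall (x y : vec) (t : R), C x -> C y -> 0 <= t -> t <= 1 ->
    C (t *: x + (1 - t) *: y).

Definition convex_fun_Rn (f : vec -> \bar R) : Prop :=
  forall (x y : vec) (t : R), 0 < t -> t < 1 ->
    (f (t *: x + (1 - t) *: y)%R <= t%:E * f x + (1 - t)%:E * f y)%E.

Definition proper_fun (f : vec -> \bar R) : Prop :=
  (forall x, f x != -oo%E) /\ (exists x, f x \is a fin_num).

Definition closed_fun (f : vec -> \bar R) : Prop := lower_semicontinuous f.

Definition coercive (h : vec -> \bar R) : Prop :=
  forall M : R, exists r : R, forall x, r <= enorm x -> (M%:E <= h x)%E.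

Definition is_proj (C : set vec) (x p : vec) : Prop :=
  C p /\ forall q, C q -> enorm (x - p) <= enorm (x - q).
Definition proj (C : set vec) (x : vec) : vec := xget 0 [set p | is_proj C x p].

Definition dist (x : vec) (C : set vec) : R := enorm (x - proj C x).

Definition is_prox (g : vec -> \bar R) (y p : vec) : Prop :=
  forall q, (g p + (2^-1 * enorm (p - y) ^+ 2)%:E
             <= g q + (2^-1 * enorm (q - y) ^+ 2)%:E)%E.
Definition prox (g : vec -> \bar R) (y : vec) : vec := xget 0 [set p | is_prox g y p].

Definition h_rho (m : nat) (f : vec -> \bar R) (C : 'I_m -> set vec) (rho : R)
  (x : vec) : \bar R :=
  (f x + (rho / (2 * m%:R) * \sum_(i < m) dist x (C i) ^+ 2)%:E)%E.

Definition pd_map (m : nat) (f : vec -> \bar R) (C : 'I_m -> set vec) (rho : R)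
  (x : vec) : vec :=
  prox (fun z => (rho^-1)%:E * f z)%E
       ((m%:R)^-1 *: \sum_(i < m) proj (C i) x).

Definition is_minimizer (h : vec -> \bar R) (x : vec) : Prop :=
  forall z, (h x <= h z)%E.

End Defs.

(* Write [Y x] ([proj_avg]) for the average of the projections of [x] onto
   the [C i] and [D x] ([sqdist_sum]) for the sum of the squared distances from
   [x] to the [C i], so that the penalty of [h_rho] is [rho / (2 m) * D x] and
   the algorithm map is [T = prox_{f / rho} \o Y].  Projections onto closed
   convex sets, their average, and the proximal map of a proper closed convex
   function are all firmly nonexpansive, so every fixed point [z] of [T]
   satisfies
     ||T x - z||^2 <= ||x - z||^2 - ||x - T x||^2 / 2.
   Since [rho (x - Y x)] is a subgradient of the penalty at [x], and [D] is
   majorized by its quadratic model at [x], the optimality conditions of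
   [h_rho] at [x] and of the proximal problem at [Y x] coincide: the fixed
   points of [T] are the minimizers of [h_rho], which exist because [h_rho] is
   lower semicontinuous and coercive.  By the inequality above the iterates are
   bounded and [||x_k - x_(k+1)|| -> 0], so any cluster point is a fixed point,
   and Fejer monotonicity with respect to it makes the whole sequence converge. *)

From Pilot Require Import Defs.
From mathcomp Require Import all_boot all_order all_algebra.
From mathcomp Require Import all_classical all_reals all_analysis.
From mathcomp Require Import ring lra.
Import Order.TTheory GRing.Theory Num.Theory.
Import numFieldNormedType.Exports.
Set Implicit Arguments. Unset Strict Implicit. Unset Printing Implicit Defensive.
Local Open Scope classical_set_scope.
Local Open Scope ring_scope.

Section Euclid.
Variables (R : realType) (n : nat).
Local Notation vec := 'rV[R]_n.
Implicit Types (x y z : vec).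

Definition dot x y : R := \sum_(j < n) x ord0 j * y ord0 j.
Definition sqnorm x : R := dot x x.

Lemma dotC x y : dot x y = dot y x.
Proof. by apply: eq_bigr => j _; rewrite mulrC. Qed.

Lemma dotDl x y z : dot (x + y) z = dot x z + dot y z.
Proof. by rewrite /dot -big_split; apply: eq_bigr => j _; rewrite mxE mulrDl. Qed.

Lemma dotNl x y : dot (- x) y = - dot x y.
Proof. by rewrite /dot -sumrN; apply: eq_bigr => j _; rewrite mxE mulNr. Qed.

Lemma dotZl a x y : dot (a *: x) y = a * dot x y.
Proof. by rewrite /dot mulr_sumr; apply: eq_bigr => j _; rewrite mxE mulrA. Qed.

Lemma dotBl x y z : dot (x - y) z = dot x z - dot y z.
Proof. by rewrite dotDl dotNl. Qed.

Lemma dotDr x y z : dot x (y + z) = dot x y + dot x z.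
Proof. by rewrite dotC dotDl !(dotC x). Qed.

Lemma dotNr x y : dot x (- y) = - dot x y.
Proof. by rewrite dotC dotNl dotC. Qed.

Lemma dotBr x y z : dot x (y - z) = dot x y - dot x z.
Proof. by rewrite dotDr dotNr. Qed.

Lemma dotZr a x y : dot x (a *: y) = a * dot x y.
Proof. by rewrite dotC dotZl dotC. Qed.

Lemma dot0l x : dot 0 x = 0.
Proof. by rewrite /dot big1 // => j _; rewrite mxE mul0r. Qed.

Lemma dot_suml m (u : 'I_m -> vec) y :
  dot (\sum_(i < m) u i) y = \sum_(i < m) dot (u i) y.
Proof.
rewrite /dot exchange_big /=; apply: eq_bigr => j _.
by rewrite summxE mulr_suml.
Qed.

Lemma dot_sumr m x (u : 'I_m -> vec) :
  dot x (\sum_(i < m) u i) = \sum_(i < m) dot x (u i).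
Proof. by rewrite dotC dot_suml; apply: eq_bigr => i _; rewrite dotC. Qed.

Lemma sqnorm_ge0 x : 0 <= sqnorm x.
Proof. by apply: sumr_ge0 => j _; rewrite -expr2 sqr_ge0. Qed.

Lemma sqnorm_eq0 x : (sqnorm x == 0) = (x == 0).
Proof.
apply/eqP/eqP => [x0|->]; last exact: dot0l.
apply/rowP => j; rewrite mxE; apply/eqP; rewrite -sqrf_eq0.
have /psumr_eq0P : \sum_(i < n | true) x ord0 i ^+ 2 = 0.
  by rewrite -[RHS]x0; apply: eq_bigr => i _; rewrite expr2.
by move=> /(_ (fun i _ => sqr_ge0 (x ord0 i))) /(_ j isT) ->.
Qed.

Lemma sqnormN x : sqnorm (- x) = sqnorm x.
Proof. by rewrite /sqnorm dotNl dotNr opprK. Qed.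

Lemma sqnormZ a x : sqnorm (a *: x) = a ^+ 2 * sqnorm x.
Proof. by rewrite /sqnorm dotZl dotZr mulrA expr2. Qed.

Lemma sqnormD x y : sqnorm (x + y) = sqnorm x + 2 * dot x y + sqnorm y.
Proof. rewrite /sqnorm !dotDl !dotDr (dotC y x); ring. Qed.

Lemma sqnormB x y : sqnorm (x - y) = sqnorm x - 2 * dot x y + sqnorm y.
Proof. by rewrite sqnormD dotNr sqnormN mulrN. Qed.

Lemma sqnormC x y : sqnorm (x - y) = sqnorm (y - x).
Proof. by rewrite -sqnormN opprB. Qed.

Lemma ler_dot x y : 2 * dot x y <= sqnorm x + sqnorm y.
Proof. have := sqnorm_ge0 (x - y); rewrite sqnormB; lra. Qed.

Lemma sqnormD_le x y : sqnorm (x + y) <= 2 * sqnorm x + 2 * sqnorm y.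
Proof. have := ler_dot x y; rewrite sqnormD; lra. Qed.

Lemma enorm_sqr x : enorm x ^+ 2 = sqnorm x.
Proof.
rewrite /enorm sqr_sqrtr; last exact: sqnorm_ge0.
by apply: eq_bigr => j _; rewrite expr2.
Qed.

Lemma enorm_ge0 x : 0 <= enorm x.
Proof. exact: sqrtr_ge0. Qed.

Lemma ler_enorm x y : (enorm x <= enorm y) = (sqnorm x <= sqnorm y).
Proof. by rewrite -!enorm_sqr ler_pXn2r // nnegrE enorm_ge0. Qed.

Lemma dot_young x y (e : R) : 0 < e ->
  - dot x y <= sqnorm x / e + e / 4 * sqnorm y.
Proof.
move=> e0; have := sqnorm_ge0 (x + (e / 2) *: y).
rewrite sqnormD dotZr sqnormZ => h; rewrite -(ler_pM2l e0).
have -> : e * (sqnorm x / e + e / 4 * sqnorm y) = sqnorm x + (e / 2) ^+ 2 * sqnorm y.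
  by field; rewrite gt_eqF.
nra.
Qed.

(* The topology of ['rV[R]_n] is that of the max norm [`|x|]. *)
Lemma ler_coord_norm x j : `|x ord0 j| <= `|x|.
Proof.
have -> : `|x| = mx_norm x by [].
rewrite mx_normrE; apply/bigmax_geP; right => /=.
by exists (ord0, j) => //=; rewrite mem_enum.
Qed.

Lemma sqr_norm_le_sqnorm x : `|x| ^+ 2 <= sqnorm x.
Proof.
have [->|x0] := eqVneq x 0; first by rewrite normr0 expr0n sqnorm_ge0.
have /mx_norm_neq0 [[i j] hij] : mx_norm x != 0.
  by apply: contra x0 => /eqP /mx_norm_eq0 ->.
have -> : `|x| = mx_norm x by [].
rewrite hij /= (ord1 i) real_normK ?num_real //.
rewrite /sqnorm /dot (bigD1 j) //= -expr2 lerDl sumr_ge0 // => k _.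
by rewrite -expr2 sqr_ge0.
Qed.

Lemma norm_le_enorm x : `|x| <= enorm x.
Proof.
rewrite -(ler_pXn2r (n := 2)) // ?nnegrE ?enorm_ge0 //.
by rewrite enorm_sqr sqr_norm_le_sqnorm.
Qed.

Lemma ler_norm_dot x y : `|dot x y| <= n%:R * (`|x| * `|y|).
Proof.
apply: le_trans (ler_norm_sum _ _ _) _.
rewrite -[n in n%:R]card_ord -sum1_card natr_sum mulr_suml.
apply: ler_sum => j _; rewrite mul1r normrM.
by apply: ler_pM => //; exact: ler_coord_norm.
Qed.

Lemma sqnorm_lipschitz_below (a x : vec) :
  exists L, forall y, sqnorm (x - a) - L * `|y - x| <= sqnorm (y - a).
Proof.
exists (2 * (n%:R * `|x - a|)) => y.
have -> : y - a = (x - a) + (y - x) by rewrite [RHS]addrC addrA subrK.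
rewrite (sqnormD (x - a)); have := sqnorm_ge0 (y - x).
have := ler_norm_dot (x - a) (y - x); rewrite real_ler_norml ?num_real //.
move=> /andP[h _]; nra.
Qed.

Lemma nbhs_sqnorm_lt x e : 0 < e -> nbhs x [set y | sqnorm (x - y) < e].
Proof.
move=> e0; have n1 : 0 < (n%:R : R) + 1 by rewrite ltr_wpDl.
have d0 : 0 < Num.min 1 (e / (n%:R + 1)) by rewrite lt_min ltr01 /= divr_gt0.
apply: filterS (nbhs_ball_norm x (PosNum d0)) => y /=.
rewrite lt_min => /andP[t1 t2]; set t := `|x - y| in t1 t2.
have t0 : 0 <= t := normr_ge0 _.
have := ler_norm_dot (x - y) (x - y); rewrite -/t real_ler_norml ?num_real //.
move=> /andP[_ h1]; rewrite ltr_pdivlMr // in t2.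
have h2 : t * t <= t by rewrite -[leRHS]mulr1 ler_wpM2l // ltW.
have h3 : (0 : R) <= n%:R := ler0n _ _.
rewrite /sqnorm; nra.
Qed.

Lemma closed_ball_norm_compact r : compact (closed_ball_ (fun x : vec => `|x|) 0 r).
Proof.
apply: bounded_closed_compact; last exact: closed_closed_ball_.
exists r; split; first exact: num_real.
move=> M hM x; rewrite /closed_ball_ /= sub0r normrN => hx.
exact: le_trans hx (ltW hM).
Qed.

End Euclid.

Lemma le0_small_scale (R : realFieldType) (a b : R) :
  (forall t, 0 < t -> t < 1 -> a <= t * b) -> a <= 0.
Proof.
move=> h; rewrite leNgt; apply/negP => a0.
have b0 : 0 < b by have := h 2^-1 ltac:(lra) ltac:(lra); nra.
pose t := Num.min 2^-1 (a / (2 * b)).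
have t0 : 0 < t by rewrite lt_min; apply/andP; split; [lra | rewrite divr_gt0 //; lra].
have t1 : t < 1 by rewrite gt_min; apply/orP; left; lra.
have : t * b <= a / (2 * b) * b by rewrite ler_wpM2r ?(ltW b0) // /t ge_min lexx orbT.
have -> : a / (2 * b) * b = a / 2 by field; rewrite gt_eqF.
have := h t t0 t1; lra.
Qed.

Section ExtendedReal.
Variable R : realType.
Local Open Scope ereal_scope.

Lemma exists_fin_between (c : R) (u : \bar R) :
  c%:E < u -> exists2 b : R, (c < b)%R & b%:E < u.
Proof.
case: u => [v| |] //=; last by exists (c + 1)%R; rewrite ?ltey //; lra.
by rewrite lte_fin => cv; exists ((c + v) / 2)%R; rewrite ?lte_fin; lra.
Qed.

Lemma exists_fin_sep (u w : \bar R) :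
  u < w -> exists2 a : R, u <= a%:E & a%:E < w.
Proof.
case: u => [v| |]; case: w => [z| |] //= uw.
- by exists v.
- by exists v; rewrite ?ltey.
- by exists (z - 1)%R; rewrite ?leNye // lte_fin; lra.
- by exists 0%R; rewrite ?ltey ?leNye.
Qed.

End ExtendedReal.

Section LowerSemicontinuity.
Variable R : realType.
Local Open Scope ereal_scope.

(* A lower Lipschitz bound at each point is what the subgradient inequality of
   a convex penalty provides. *)
Lemma lower_semicontinuousD_lipschitz (V : normedModType R) (f : V -> \bar R)
    (G : V -> R) :
  lower_semicontinuous f ->
  (forall x, exists L, forall y, G x - L * `|y - x| <= G y)%R ->
  lower_semicontinuous (fun x => f x + (G x)%:E).
Proof.
move=> lf hG x a hax.
have hfx : (a - G x)%:E < f x.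
  by move: hax; case: (f x) => [v| |] //=; rewrite ?ltey // -EFinD !lte_fin; lra.
have [b hb1 hb2] := exists_fin_between hfx.
have [U Ux HU] := lf x b hb2.
have [L HL] := hG x.
pose d := ((b - (a - G x)) / (`|L| + 1))%R.
have L1 : (0 < `|L| + 1)%R by rewrite ltr_wpDl.
have d0 : (0 < d)%R by rewrite divr_gt0 //; lra.
exists (U `&` ball_ Num.norm x d); first exact: filterI (nbhs_ball_norm x (PosNum d0)).
move=> y [Uy]; rewrite /ball_ /= -normrN opprB ltr_pdivlMr // => hy.
have hLy : (L * `|y - x| <= `|L| * `|y - x|)%R.
  by rewrite ler_wpM2r // real_ler_norm // num_real.
have hGy : ((a - b)%:E < (G y)%:E).
  rewrite lte_fin; apply: lt_le_trans (HL y); have := normr_ge0 (y - x)%R; nra.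
by have := lteD (HU y Uy) hGy; rewrite -EFinD addrC subrK.
Qed.

(* The indicator function of convex analysis, not [\1_A]. *)
Definition eindic (T : Type) (A : set T) (z : T) : \bar R :=
  if pselect (A z) then 0 else +oo.

Lemma eindic_ge0 (T : Type) (A : set T) z : 0 <= eindic A z.
Proof. by rewrite /eindic; case: pselect. Qed.

Lemma lower_semicontinuous_eindic (T : topologicalType) (A : set T) :
  closed A -> lower_semicontinuous (eindic A).
Proof.
move=> cA x a; rewrite /eindic; case: pselect => Ax h.
  by exists setT => [|y _]; [exact: filterT | apply: lt_le_trans h (eindic_ge0 _ _)].
exists (~` A); first by apply: open_nbhs_nbhs; split => //; exact: closed_openC.
by move=> y Ay; case: pselect.
Qed.

Lemma lower_semicontinuous_compact_min (T : topologicalType) (K : set T)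
    (phi : T -> \bar R) :
  compact K -> K !=set0 -> lower_semicontinuous phi ->
  exists2 p, K p & forall z, K z -> phi p <= phi z.
Proof.
move=> cK [x0 Kx0] lphi.
pose below z := [set w | K w /\ phi w <= phi z].
have Fbelow : ProperFilter (filter_from K below).
  apply: filter_from_proper; last by move=> z Kz; exists z.
  apply: filter_from_filter; first by exists x0.
  move=> z z' Kz Kz'; have [zz'|z'z] := leP (phi z) (phi z').
    by exists z => // w [Kw hw]; do 2 split => //; exact: le_trans hw zz'.
  by exists z' => // w [Kw hw]; do 2 split => //; exact: le_trans hw (ltW z'z).
have FK : filter_from K below K by exists x0 => // w [].
have [p [Kp clp]] := cK _ Fbelow FK.
exists p => // z Kz; rewrite leNgt; apply/negP => zp.
have [a za ap] := exists_fin_sep zp.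
have [U Up HU] := lphi p a ap.
have Fz : filter_from K below (below z) by exists z.
have [w [[_ wz] Uw]] := clp (below z) U Fz Up.
by have := HU w Uw; rewrite ltNge (le_trans wz za).
Qed.

End LowerSemicontinuity.
Arguments eindic {R T}.

Section Minimizers.
Variables (R : realType) (n : nat).
Local Notation vec := 'rV[R]_n.
Implicit Types (z : vec) (phi : vec -> \bar R).

Lemma coercive_sqnorm phi :
  (forall M, exists s, forall z, s <= sqnorm z -> (M%:E <= phi z)%E) -> coercive phi.
Proof.
move=> h M; have [s hs] := h M.
exists (1 + `|s|) => z hz; apply: hs.
rewrite -enorm_sqr; apply: le_trans (ler_norm s) _.
have s1 : 0 <= 1 + `|s| by rewrite addr_ge0.
have : (1 + `|s|) ^+ 2 <= enorm z ^+ 2 by rewrite ler_pXn2r // nnegrE enorm_ge0.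
by apply: le_trans; rewrite expr2; have := normr_ge0 s; nra.
Qed.

Lemma lower_semicontinuous_coercive_min phi :
  lower_semicontinuous phi -> coercive phi -> exists p, is_minimizer phi p.
Proof.
move=> lphi cphi.
have [[x0 fin_x0]|all_inf] := pselect (exists x, (phi x < +oo)%E); last first.
  exists 0 => z; suff -> : phi z = +oo%E by exact: leey.
  by apply/eqP; rewrite -leye_eq leNgt; apply/negP => zy; apply: all_inf; exists z.
have [M x0M] : exists M : R, (phi x0 < M%:E)%E.
  move: fin_x0; case: (phi x0) => [v _| //|_]; last by exists 0; rewrite ltNye.
  by exists (v + 1); rewrite lte_fin ltrDl.
have [r hr] := cphi M.
pose K := closed_ball_ (fun x : vec => `|x|) 0 (`|r| + `|x0|).
have inK z : K z = (`|z| <= `|r| + `|x0|) by rewrite /K /closed_ball_ /= sub0r normrN.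
have Kx0 : K x0 by rewrite inK lerDr.
have [p Kp pmin] := lower_semicontinuous_compact_min
  (@closed_ball_norm_compact R n _) (ex_intro _ x0 Kx0) lphi.
exists p => z; have [Kz|Kz] := pselect (K z); first exact: pmin.
have zM : (M%:E <= phi z)%E.
  have zK : `|r| + `|x0| < `|z| by rewrite ltNge; apply/negP; rewrite -inK.
  apply/hr/(le_trans _ (norm_le_enorm z))/(le_trans _ (ltW zK)).
  by rewrite (le_trans (ler_norm r)) // lerDl.
exact: le_trans (pmin x0 Kx0) (le_trans (ltW x0M) zM).
Qed.

End Minimizers.

Section FirmlyNonexpansive.
Variables (R : realType) (n : nat).
Local Notation vec := 'rV[R]_n.
Implicit Types (x z : vec) (F G : vec -> vec).

Definition firmly_nonexpansive F :=
  forall x z, sqnorm (F x - F z) <= dot (x - z) (F x - F z).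

Lemma fne_sqnormB (d e : vec) :
  sqnorm e <= dot d e -> sqnorm (d - e) <= sqnorm d - sqnorm e.
Proof. by rewrite sqnormB; lra. Qed.

Lemma fne_nonexpansive F x z :
  firmly_nonexpansive F -> sqnorm (F x - F z) <= sqnorm (x - z).
Proof.
move=> /(_ x z) /fne_sqnormB; have := sqnorm_ge0 (x - z - (F x - F z)); lra.
Qed.

Lemma fne_avg m (P : 'I_m -> vec -> vec) : (0 < m)%N ->
  (forall i, firmly_nonexpansive (P i)) ->
  firmly_nonexpansive (fun x => m%:R^-1 *: \sum_(i < m) P i x).
Proof.
move=> m0 fneP x z; rewrite -scalerBr -sumrB.
set u := fun i => P i x - P i z; set w := _ *: _.
have mR : 0 < m%:R :> R by rewrite ltr0n.
have mw : m%:R *: w = \sum_(i < m) u i by rewrite scalerA mulfV ?gt_eqF // scale1r.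
have e1 : m%:R * sqnorm w = \sum_(i < m) dot (u i) w by rewrite -dotZl mw dot_suml.
have e2 : m%:R * dot (x - z) w = \sum_(i < m) dot (x - z) (u i).
  by rewrite -dotZr mw dot_sumr.
have h1 : \sum_(i < m) 2 * dot (u i) w <= \sum_(i < m) (sqnorm (u i) + sqnorm w).
  by apply: ler_sum => i _; exact: ler_dot.
have h2 : \sum_(i < m) sqnorm (u i) <= \sum_(i < m) dot (x - z) (u i).
  by apply: ler_sum => i _; exact: fneP.
rewrite -mulr_sumr big_split /= sumr_const card_ord mulr_natl -e1 in h1.
rewrite -(ler_pM2l mR) e2; lra.
Qed.

Lemma fne_comp_fixed F G x z : firmly_nonexpansive F -> firmly_nonexpansive G ->
  F (G z) = z ->
  sqnorm (F (G x) - z) <= sqnorm (x - z) - sqnorm (x - F (G x)) / 2.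
Proof.
move=> fneF fneG FGz.
have hF := fne_sqnormB (fneF (G x) (G z)); rewrite FGz in hF.
have hG := fne_sqnormB (fneG x z).
have := sqnormD_le (x - z - (G x - G z)) (G x - G z - (F (G x) - z)).
have -> : x - z - (G x - G z) + (G x - G z - (F (G x) - z)) = x - F (G x).
  by apply/rowP => j; rewrite !mxE; ring.
lra.
Qed.

End FirmlyNonexpansive.

Section Projection.
Variables (R : realType) (n : nat).
Local Notation vec := 'rV[R]_n.
Local Notation proj := (@Defs.proj R n).
Implicit Types (x y z p q : vec) (C : set vec).

Definition nonempty_closed_convex C := C !=set0 /\ closed C /\ convex_set_Rn C.

Lemma is_projE C x p :
  is_proj C x p <-> C p /\ forall q, C q -> sqnorm (x - p) <= sqnorm (x - q).
Proof.
by split=> -[Cp h]; split=> // q Cq; [rewrite -ler_enorm | rewrite ler_enorm]; apply: h.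
Qed.

Lemma proj_exists C x : C !=set0 -> closed C -> exists p, is_proj C x p.
Proof.
move=> [c Cc] cC.
pose phi z := (eindic C z + (sqnorm (z - x))%:E)%E.
have lphi : lower_semicontinuous phi.
  exact: lower_semicontinuousD_lipschitz (lower_semicontinuous_eindic cC)
    (sqnorm_lipschitz_below x).
have cphi : coercive phi.
  apply: coercive_sqnorm => M; exists (2 * (M + sqnorm x)) => z hz.
  rewrite /phi; apply: lee_paddl; first exact: eindic_ge0.
  by rewrite lee_fin; have := sqnormD_le (z - x) x; rewrite subrK; lra.
have [p pmin] := lower_semicontinuous_coercive_min lphi cphi.
have phiC z : C z -> phi z = (sqnorm (z - x))%:E.
  by move=> Cz; rewrite /phi /eindic; case: pselect => //= _; rewrite add0e.
have Cp : C p.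
  apply: contrapT => nCp; move: (pmin c); rewrite (phiC c) // /phi /eindic.
  by case: pselect.
exists p; apply/is_projE; split => // q Cq.
by rewrite (sqnormC x p) (sqnormC x q) -lee_fin -!phiC.
Qed.

Lemma proj_spec C x : C !=set0 -> closed C -> is_proj C x (proj C x).
Proof. by move=> C0 cC; apply: xgetPex; exact: proj_exists. Qed.

Lemma proj_variational C x p q : convex_set_Rn C -> is_proj C x p -> C q ->
  dot (x - p) (q - p) <= 0.
Proof.
move=> cvC /is_projE [Cp pmin] Cq.
apply: (le0_small_scale (b := sqnorm (q - p))) => t t0 t1.
have := pmin _ (cvC _ _ t Cq Cp (ltW t0) (ltW t1)).
have -> : x - (t *: q + (1 - t) *: p) = (x - p) - t *: (q - p).
  by apply/rowP => j; rewrite !mxE; ring.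
rewrite (sqnormB (x - p)) dotZr sqnormZ expr2 => h.
have := sqnorm_ge0 (q - p); nra.
Qed.

Lemma proj_firmly_nonexpansive C : nonempty_closed_convex C ->
  firmly_nonexpansive (proj C).
Proof.
move=> [C0 [cC cvC]] x z.
have px := proj_spec x C0 cC; have pz := proj_spec z C0 cC.
have h1 := proj_variational cvC px pz.1.
have h2 := proj_variational cvC pz px.1.
rewrite -[proj C z - _]opprB dotNr in h1.
have -> : x - z = (x - proj C x) - (z - proj C z) + (proj C x - proj C z).
  by apply/rowP => j; rewrite !mxE; ring.
by rewrite dotDl dotBl /sqnorm; lra.
Qed.

Lemma sqdist_subgradient C x z : nonempty_closed_convex C ->
  sqnorm (x - proj C x) + 2 * dot (x - proj C x) (z - x) <= sqnorm (z - proj C z).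
Proof.
move=> [C0 [cC cvC]].
have := proj_variational cvC (proj_spec x C0 cC) (proj_spec z C0 cC).1.
have -> : z - proj C z = (x - proj C x) + ((z - x) - (proj C z - proj C x)).
  by apply/rowP => j; rewrite !mxE; ring.
rewrite (sqnormD (x - proj C x)) (dotBr _ (z - x)).
have := sqnorm_ge0 (z - x - (proj C z - proj C x)); lra.
Qed.

End Projection.

Section ConvexOptimality.
Variables (R : realType) (n : nat) (f : 'rV[R]_n -> \bar R).
Local Notation vec := 'rV[R]_n.
Hypotheses (f_proper : proper_fun f) (f_convex : convex_fun_Rn f).

Lemma proper_funE x : f x = +oo%E \/ f x = (fine (f x))%:E.
Proof. by have := f_proper.1 x; case: (f x) => [a| |] // _; [right | left]. Qed.

(* [- v] is a subgradient of [f] at [p]: compare [p] with [p + t (z - p)]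
   using convexity of [f] and the quadratic majorant of [Q], and let [t -> 0]. *)
Lemma convex_min_subgradient (Q : vec -> R) (p v : vec) (K : R) :
  is_minimizer (fun q => f q + (Q q)%:E)%E p ->
  (forall d t, 0 < t -> t < 1 ->
     Q (p + t *: d) <= Q p + t * dot v d + t ^+ 2 * (K * sqnorm d)) ->
  exists2 a : R, f p = a%:E & forall z, ((a - dot v (z - p))%:E <= f z)%E.
Proof.
move=> pmin Qmaj; have [x0 fx0] := f_proper.2.
have [fp_inf|fpE] := proper_funE p.
  by move: (pmin x0); rewrite fp_inf addye // -(fineK fx0) -EFinD leye_eq.
exists (fine (f p)) => // z; set a := fine (f p) in fpE *.
case: (proper_funE z) => [->|fzE]; first exact: leey.
set w := fine (f z) in fzE; rewrite fzE lee_fin.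
suff : a - dot v (z - p) - w <= 0 by lra.
apply: (le0_small_scale (b := K * sqnorm (z - p))) => t t0 t1.
have zt_conv : p + t *: (z - p) = t *: z + (1 - t) *: p.
  by apply/rowP => j; rewrite !mxE; ring.
have := leeD (f_convex z p t0 t1) (lexx (Q (p + t *: (z - p)))%:E).
rewrite -zt_conv fzE fpE -!EFinM -!EFinD => /(le_trans (pmin _)).
rewrite fpE -EFinD lee_fin => h; have := Qmaj (z - p) t t0 t1.
rewrite expr2 => hQ; rewrite -(ler_pM2l t0); lra.
Qed.

End ConvexOptimality.

Section Prox.
Variables (R : realType) (n : nat) (f : 'rV[R]_n -> \bar R) (rho : R).
Local Notation vec := 'rV[R]_n.
Local Notation g := (fun z => (rho^-1)%:E * f z)%E.
Hypotheses (f_proper : proper_fun f) (f_lsc : lower_semicontinuous f)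
  (f_convex : convex_fun_Rn f) (rho_gt0 : 0 < rho).
Implicit Types (y p q : vec).

Definition prox_obj y q : \bar R := (f q + (rho / 2 * sqnorm (q - y))%:E)%E.

Lemma is_prox_scaledE y p : is_prox g y p <-> is_minimizer (prox_obj y) p.
Proof.
have obj q : (g q + (2^-1 * enorm (q - y) ^+ 2)%:E)%E = ((rho^-1)%:E * prox_obj y q)%E.
  rewrite /prox_obj muleDr ?fin_num_adde_defl // enorm_sqr -EFinM.
  by congr (_ + _%:E)%E; field; rewrite gt_eqF.
have rhoV : (0 < (rho^-1)%:E)%E by rewrite lte_fin invr_gt0.
by split=> pmin q; move: (pmin q); rewrite !obj lee_pmul2l.
Qed.

(* An affine minorant makes [prox_obj y] coercive; for the [f] of the main
   theorem it is read off a minimizer of [h_rho] (see [f_affine_minorant]),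
   which avoids a separation argument. *)
Hypothesis f_minorant : exists a v, forall z, ((a + dot v z)%:E <= f z)%E.

Lemma prox_obj_exists_min y : exists p, is_minimizer (prox_obj y) p.
Proof.
have [a [v minor]] := f_minorant; apply: lower_semicontinuous_coercive_min.
  apply: lower_semicontinuousD_lipschitz f_lsc _ => q.
  have [L HL] := sqnorm_lipschitz_below y q.
  exists (rho / 2 * L) => q'; have := HL q'.
  by rewrite -(ler_pM2l (_ : 0 < rho / 2)) ?divr_gt0 //; lra.
pose c0 := a - 2 * sqnorm v / rho - rho / 2 * sqnorm y.
have lb q : ((c0 + rho / 8 * sqnorm q)%:E <= prox_obj y q)%E.
  rewrite /prox_obj; case: (proper_funE f_proper q) => [->|fqE].
    by rewrite addye // leey.
  have := minor q; rewrite fqE -EFinD !lee_fin.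
  have rho2 : 0 < rho / 2 by rewrite divr_gt0.
  have := dot_young v q rho2.
  have -> : sqnorm v / (rho / 2) = 2 * sqnorm v / rho by field; rewrite gt_eqF.
  have rho4 : 0 <= rho / 4 by rewrite divr_ge0 ?ltW.
  have := ler_wpM2l rho4 (sqnormD_le (q - y) y).
  by rewrite subrK /c0; lra.
apply: coercive_sqnorm => M; exists (8 * (M - c0) / rho) => q hq.
apply: le_trans (lb q); rewrite lee_fin.
by move: hq; rewrite ler_pdivrMr //; lra.
Qed.

Lemma prox_min y : is_minimizer (prox_obj y) (prox g y).
Proof.
apply/is_prox_scaledE; apply: xgetPex.
by have [p pmin] := prox_obj_exists_min y; exists p; apply/is_prox_scaledE.
Qed.

Lemma prox_obj_min_subgradient y p : is_minimizer (prox_obj y) p ->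
  exists2 a : R, f p = a%:E & forall z, ((a - rho * dot (p - y) (z - p))%:E <= f z)%E.
Proof.
move=> pmin; pose Q q := rho / 2 * sqnorm (q - y).
have Qmaj d t : 0 < t -> t < 1 ->
    Q (p + t *: d) <= Q p + t * dot (rho *: (p - y)) d + t ^+ 2 * (rho / 2 * sqnorm d).
  move=> _ _; rewrite /Q addrAC (sqnormD (p - y)) dotZr sqnormZ dotZl; lra.
have [a fpE sub] := convex_min_subgradient f_proper f_convex pmin Qmaj.
by exists a => // z; rewrite -dotZl.
Qed.

Lemma prox_obj_min_fne y y' p p' :
  is_minimizer (prox_obj y) p -> is_minimizer (prox_obj y') p' ->
  sqnorm (p - p') <= dot (y - y') (p - p').
Proof.
move=> /prox_obj_min_subgradient [a fpE sub] /prox_obj_min_subgradient [a' fpE' sub'].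
move: (sub p') (sub' p); rewrite fpE fpE' !lee_fin -[p' - p]opprB dotNr => h1 h2.
rewrite -subr_le0 -(pmulr_rle0 _ rho_gt0).
by move: h1 h2; rewrite /sqnorm !dotBl; lra.
Qed.

Lemma prox_firmly_nonexpansive : firmly_nonexpansive (prox g).
Proof. by move=> y y'; apply: prox_obj_min_fne; apply: prox_min. Qed.

Lemma prox_obj_minP y p : is_minimizer (prox_obj y) p -> prox g y = p.
Proof.
move=> pmin; have := prox_obj_min_fne (prox_min y) pmin.
rewrite subrr dot0l => h; apply/eqP; rewrite -subr_eq0 -sqnorm_eq0 eq_le h.
exact: sqnorm_ge0.
Qed.

End Prox.

Section FejerIteration.
Variables (R : realType) (n : nat) (T : 'rV[R]_n -> 'rV[R]_n).
Local Notation vec := 'rV[R]_n.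
Hypotheses
  (T_nonexpansive : forall x z, sqnorm (T x - T z) <= sqnorm (x - z))
  (T_fejer : forall x z, T z = z ->
     sqnorm (T x - z) <= sqnorm (x - z) - sqnorm (x - T x) / 2).
Variable x0 : vec.
Local Notation x_ k := (iter k T x0).
Local Notation xs := (fun k => iter k T x0).

Lemma iter_fejer_mono z : T z = z ->
  {homo (fun k => sqnorm (x_ k - z)) : k j / (k <= j)%N >-> j <= k}.
Proof.
move=> Tz; apply/nonincreasing_seqP => k /=; have := T_fejer (x_ k) Tz.
have := sqnorm_ge0 (x_ k - T (x_ k)); lra.
Qed.

Lemma iter_step_bound z N : T z = z ->
  sqnorm (x_ N - z) + N%:R / 2 * sqnorm (x_ N - x_ N.+1) <= sqnorm (x0 - z).
Proof.
move=> Tz; elim: N => [|N IH]; first by rewrite mul0r mul0r addr0.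
have step := T_nonexpansive (x_ N) (x_ N.+1); rewrite -!iterS in step.
have fejer := T_fejer (x_ N) Tz; rewrite -iterS in fejer.
have N2 : 0 <= N%:R / 2 :> R by rewrite divr_ge0.
have := ler_wpM2l N2 step; have -> : N.+1%:R = N%:R + 1 :> R by rewrite natr1.
lra.
Qed.

Lemma iter_asymptotically_regular z e : T z = z -> 0 < e ->
  exists N, forall k, (N <= k)%N -> sqnorm (x_ k - x_ k.+1) < e.
Proof.
move=> Tz e0; exists (Num.truncn (2 * sqnorm (x0 - z) / e)).+1 => k Nk.
rewrite ltNge; apply/negP => ek.
have kN : 2 * sqnorm (x0 - z) / e < k%:R.
  by apply: lt_le_trans (truncnS_gt _) _; rewrite ler_nat.
rewrite ltr_pdivrMr // in kN.
have k2 : 0 <= k%:R / 2 :> R by rewrite divr_ge0.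
have := iter_step_bound k Tz; have := sqnorm_ge0 (x_ k - z).
have := ler_wpM2l k2 ek; lra.
Qed.

Lemma iter_bounded z k : T z = z -> `|x_ k| <= `|z| + (1 + sqnorm (x0 - z)).
Proof.
move=> Tz; have := iter_fejer_mono Tz (leq0n k) => /= fejer.
have := sqr_norm_le_sqnorm (x_ k - z); set t := `|x_ k - z| => t_sq.
have : t <= 1 + sqnorm (x0 - z) by have := sqr_ge0 (t - 1); nra.
rewrite -(lerD2l `|z|); apply: le_trans.
by rewrite -[x in `|x|](subrK z) addrC ler_normD.
Qed.

Lemma iter_cluster : (exists z, T z = z) -> exists p, cluster (xs @ \oo) p.
Proof.
move=> [z Tz]; pose r := `|z| + (1 + sqnorm (x0 - z)).
have FK : (xs @ \oo) (closed_ball_ (fun x : vec => `|x|) 0 r).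
  by exists 0%N => // k _; rewrite /closed_ball_ /= sub0r normrN iter_bounded.
have Fxs : ProperFilter (xs @ \oo) by exact: fmap_proper_filter.
by have [p [_ clp]] := closed_ball_norm_compact Fxs FK; exists p.
Qed.

Lemma cluster_iter_fixed p : (exists z, T z = z) -> cluster (xs @ \oo) p -> T p = p.
Proof.
move=> [z Tz] clp; apply/eqP; rewrite -subr_eq0 -sqnorm_eq0 eq_le sqnorm_ge0 andbT.
rewrite leNgt; apply/negP; set e := sqnorm (T p - p) => e0.
have [e8 e12] : 0 < e / 8 /\ 0 < e / 12 by rewrite !divr_gt0.
have [N regN] := iter_asymptotically_regular Tz e8.
pose tail := [set y | exists2 k, (N <= k)%N & y = x_ k].
have Ftail : (xs @ \oo) tail by exists N => // k /= Nk; exists k.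
have [_ [[k Nk ->] /= near_p]] := clp tail _ Ftail (nbhs_sqnorm_lt p e12).
have splitp (u v w : vec) : u - w = (u - v) + (v - w) by rewrite addrA subrK.
have := sqnormD_le (T p - x_ k.+1) (x_ k.+1 - p); rewrite -splitp.
have := sqnormD_le (x_ k.+1 - x_ k) (x_ k - p); rewrite -splitp.
have := T_nonexpansive p (x_ k); have := regN k Nk.
by rewrite !iterS (sqnormC (x_ k) (T (x_ k))) (sqnormC (x_ k) p) -/e; lra.
Qed.

Lemma fixed_cluster_iter_cvg p : T p = p -> cluster (xs @ \oo) p -> xs @ \oo --> p.
Proof.
move=> Tp clp; apply/cvgrPdist_lt => eps eps0.
have Fall : (xs @ \oo) (range xs) by exists 0%N => // k _; exists k.
have [_ [[k _ <-] /= near_p]] := clp _ _ Fall (nbhs_sqnorm_lt p (exprn_gt0 2 eps0)).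
exists k => // j /= kj.
rewrite -(ltr_pXn2r (n := 2)) ?nnegrE ?normr_ge0 ?ltW //.
apply: le_lt_trans (sqr_norm_le_sqnorm _) _; rewrite sqnormC.
by apply: le_lt_trans (iter_fejer_mono Tp kj) _; rewrite sqnormC.
Qed.

Lemma iter_cvg_fixed : (exists z, T z = z) -> exists2 p, T p = p & xs @ \oo --> p.
Proof.
move=> Tfix; have [p clp] := iter_cluster Tfix.
have Tp := cluster_iter_fixed Tfix clp.
by exists p => //; exact: fixed_cluster_iter_cvg.
Qed.

End FejerIteration.

Section ProximalDistance.
Variables (R : realType) (n m : nat) (f : 'rV[R]_n -> \bar R)
  (C : 'I_m -> set 'rV[R]_n) (rho : R).
Local Notation vec := 'rV[R]_n.
Local Notation proj := (@Defs.proj R n).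
Local Notation h := (h_rho f C rho).
Local Notation g := (fun z => (rho^-1)%:E * f z)%E.
Local Notation T := (pd_map f C rho).
Hypotheses (m_gt0 : (0 < m)%N) (f_proper : proper_fun f)
  (f_lsc : lower_semicontinuous f) (f_convex : convex_fun_Rn f)
  (C_ncc : forall i, nonempty_closed_convex (C i)) (rho_gt0 : 0 < rho).
Implicit Types (x y z : vec).

Definition proj_avg x : vec := m%:R^-1 *: \sum_(i < m) proj (C i) x.
Definition sqdist_sum x : R := \sum_(i < m) sqnorm (x - proj (C i) x).

Let mR_gt0 : 0 < m%:R :> R. Proof. by rewrite ltr0n. Qed.
Let penalty_ge0 : 0 <= rho / (2 * m%:R). Proof. by rewrite divr_ge0 ?mulr_ge0 ?ltW. Qed.

Lemma penalty_scale u : rho / (2 * m%:R) * (2 * m%:R * u) = rho * u.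
Proof. by field; rewrite gt_eqF. Qed.

Lemma h_rhoE x : h x = (f x + (rho / (2 * m%:R) * sqdist_sum x)%:E)%E.
Proof. by congr (_ + (_ * _)%:E)%E; apply: eq_bigr => i _; rewrite enorm_sqr. Qed.

Lemma sum_sub_proj x : \sum_(i < m) (x - proj (C i) x) = m%:R *: (x - proj_avg x).
Proof.
rewrite scalerBr scalerA mulfV ?gt_eqF // scale1r sumrB.
by rewrite sumr_const card_ord scaler_nat.
Qed.

Lemma sqdist_sum_subgradient x z :
  sqdist_sum x + 2 * m%:R * dot (x - proj_avg x) (z - x) <= sqdist_sum z.
Proof.
apply: le_trans (ler_sum _ (fun i _ => sqdist_subgradient x z (C_ncc i))).
by rewrite big_split /= -mulr_sumr -dot_suml sum_sub_proj dotZl mulrA.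
Qed.

Lemma sqdist_sum_majorant x d t : sqdist_sum (x + t *: d) <=
  sqdist_sum x + 2 * t * m%:R * dot (x - proj_avg x) d + t ^+ 2 * m%:R * sqnorm d.
Proof.
have near_proj i : sqnorm (x + t *: d - proj (C i) (x + t *: d)) <=
    sqnorm (x - proj (C i) x) + 2 * t * dot (x - proj (C i) x) d + t ^+ 2 * sqnorm d.
  have [C0 [cC _]] := C_ncc i.
  have /is_projE [_ pmin] := proj_spec (x + t *: d) C0 cC.
  apply: le_trans (pmin _ (proj_spec x C0 cC).1) _.
  by rewrite addrAC (sqnormD (x - proj (C i) x)) dotZr sqnormZ mulrA.
apply: le_trans (ler_sum _ (fun i _ => near_proj i)) _.
rewrite !big_split /= -!mulr_sumr -dot_suml sum_sub_proj dotZl sumr_const card_ord.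
by rewrite -mulr_natr /sqdist_sum; lra.
Qed.

Lemma proj_avg_firmly_nonexpansive : firmly_nonexpansive proj_avg.
Proof.
by apply: fne_avg => // i; apply: proj_firmly_nonexpansive.
Qed.

Lemma lower_semicontinuous_h_rho : lower_semicontinuous h.
Proof.
rewrite (funext h_rhoE); apply: lower_semicontinuousD_lipschitz f_lsc _ => x.
exists (rho * (n%:R * `|x - proj_avg x|)) => y.
have := ler_wpM2l penalty_ge0 (sqdist_sum_subgradient x y); rewrite mulrDr penalty_scale.
have := ler_norm_dot (x - proj_avg x) (y - x).
rewrite real_ler_norml ?num_real // => /andP[+ _] => /(ler_wpM2l (ltW rho_gt0)).
by rewrite mulrN -!mulrA; lra.
Qed.

Lemma h_rho_min_subgradient x : is_minimizer h x ->
  exists2 a : R, f x = a%:E &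
    forall z, ((a - rho * dot (x - proj_avg x) (z - x))%:E <= f z)%E.
Proof.
move=> xmin; pose Q z := rho / (2 * m%:R) * sqdist_sum z.
have Qmaj d t : 0 < t -> t < 1 -> Q (x + t *: d) <=
    Q x + t * dot (rho *: (x - proj_avg x)) d + t ^+ 2 * (rho / 2 * sqnorm d).
  move=> _ _; apply: le_trans (ler_wpM2l penalty_ge0 (sqdist_sum_majorant x d t)) _.
  by rewrite /Q dotZl le_eqVlt; apply/orP; left; apply/eqP; field; rewrite gt_eqF.
have [|a fxE sub] := convex_min_subgradient f_proper f_convex _ Qmaj.
  by move=> z; rewrite -!h_rhoE.
by exists a => // z; rewrite -dotZl.
Qed.

Lemma f_affine_minorant : (exists x, is_minimizer h x) ->
  exists a v, forall z, ((a + dot v z)%:E <= f z)%E.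
Proof.
move=> [x /h_rho_min_subgradient [a _ sub]].
exists (a + rho * dot (x - proj_avg x) x), (- (rho *: (x - proj_avg x))) => z.
by apply: le_trans (sub z); rewrite lee_fin dotNl dotZl dotBr; lra.
Qed.

Hypothesis h_coercive : coercive h.

Lemma h_rho_exists_min : exists x, is_minimizer h x.
Proof.
exact: lower_semicontinuous_coercive_min lower_semicontinuous_h_rho h_coercive.
Qed.

Let f_minorant := f_affine_minorant h_rho_exists_min.
Let prox_fne := prox_firmly_nonexpansive f_proper f_lsc f_convex rho_gt0 f_minorant.

Lemma pd_mapE x : T x = prox g (proj_avg x).
Proof. by []. Qed.

Lemma pd_map_fixed_min x : T x = x -> is_minimizer h x.
Proof.
rewrite pd_mapE => Tx.
have xmin : is_minimizer (prox_obj f rho (proj_avg x)) x.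
  by rewrite -{2}Tx; exact: prox_min.
have [a fxE sub] := prox_obj_min_subgradient f_proper f_convex xmin.
move=> z; rewrite !h_rhoE fxE; case: (proper_funE f_proper z) => [->|fzE].
  by rewrite addye ?leey.
have := sub z; have := ler_wpM2l penalty_ge0 (sqdist_sum_subgradient x z).
by rewrite fzE -!EFinD !lee_fin mulrDr penalty_scale; lra.
Qed.

Lemma min_pd_map_fixed x : is_minimizer h x -> T x = x.
Proof.
move=> /h_rho_min_subgradient [a fxE sub]; rewrite pd_mapE.
apply: prox_obj_minP => // q; rewrite /prox_obj fxE.
case: (proper_funE f_proper q) => [->|fqE]; first by rewrite addye ?leey.
have -> : q - proj_avg x = (q - x) + (x - proj_avg x) by rewrite addrA subrK.
have := sub q; have := sqnorm_ge0 (q - x).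
have rho2 : 0 <= rho / 2 by rewrite divr_ge0 ?ltW.
rewrite fqE -!EFinD !lee_fin (sqnormD (q - x)) (dotC (q - x)) => qx_ge0.
have := ler_wpM2l rho2 qx_ge0; lra.
Qed.

Lemma pd_map_fejer x z : T z = z ->
  sqnorm (T x - z) <= sqnorm (x - z) - sqnorm (x - T x) / 2.
Proof. exact: fne_comp_fixed prox_fne proj_avg_firmly_nonexpansive. Qed.

Lemma pd_map_nonexpansive x z : sqnorm (T x - T z) <= sqnorm (x - z).
Proof.
apply: le_trans (fne_nonexpansive _ _ proj_avg_firmly_nonexpansive).
exact: fne_nonexpansive prox_fne.
Qed.

Lemma pd_map_fixedP x : T x = x <-> is_minimizer h x.
Proof. by split; [exact: pd_map_fixed_min | exact: min_pd_map_fixed]. Qed.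

Lemma pd_map_exists_fixed : exists x, T x = x.
Proof. by have [x /pd_map_fixedP] := h_rho_exists_min; exists x. Qed.

Lemma pd_map_iter_cvg x0 : exists p, is_minimizer h p /\
  (fun k => iter k T x0) @ \oo --> p.
Proof.
have [p /pd_map_fixedP pmin cvg] :=
  iter_cvg_fixed pd_map_nonexpansive pd_map_fejer x0 pd_map_exists_fixed.
by exists p.
Qed.

End ProximalDistance.

Theorem mainTheorem1 (R : realType) (n m : nat) (f : 'rV[R]_n -> \bar R)
  (C : 'I_m -> set 'rV[R]_n) (rho : R) :
  (0 < m)%N ->
  proper_fun f -> closed_fun f -> convex_fun_Rn f ->
  (forall i, C i !=set0 /\ closed (C i) /\ convex_set_Rn (C i)) ->
  0 < rho ->
  coercive (h_rho f C rho) ->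
  (forall x : 'rV[R]_n, pd_map f C rho x = x <-> is_minimizer (h_rho f C rho) x) /\
  (exists x : 'rV[R]_n, pd_map f C rho x = x) /\
  (forall x0 : 'rV[R]_n, exists xstar : 'rV[R]_n,
     is_minimizer (h_rho f C rho) xstar /\
     (fun k : nat => iter k (pd_map f C rho) x0) @ \oo --> xstar).
Proof.
move=> m_gt0 f_proper f_lsc f_convex C_ncc rho_gt0 h_coercive.
split; first by move=> x; apply: pd_map_fixedP.
split; first exact: pd_map_exists_fixed.
by move=> x0; apply: pd_map_iter_cvg.
Qed.
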